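(* Let $p,q,p',q'\in\mathbb{R}^3$ satisfy $p^\mu+q^\mu=p'^\mu+q'^\mu$. If $\bar g<1$, then $q'^0\approx q^0$ and $p'^0\approx p^0$ with absolute implicit constants. In particular, if $2^{-k-1}\le\bar g\le 2^{-k}$ for some integer $k>0$, then $p^0\le\sqrt5\,p'^0$ and $p'^0\le\sqrt5\,p^0$.
   Context: For $p\in\mathbb{R}^3$, $p^0=\sqrt{1+|p|^2}$, $p^\mu=(p^0,p)$, $p^\mu q_\mu=-p^0q^0+p\cdot q$, and $\bar g=g(p'^\mu,p^\mu)=\sqrt{2(-p'^\mu p_\mu-1)}$. *)

From HB Require Import structures.
From mathcomp Require Import all_boot all_order all_algebra.
From mathcomp Require Import reals.
Set Implicit Arguments. Unset Strict Implicit. Unset Printing Implicit Defensive.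
Import Order.TTheory GRing.Theory Num.Theory.
Local Open Scope ring_scope.

Section Defs.
Variable R : realType.

Definition dot3 (p q : 'rV[R]_3) : R := \sum_(i < 3) p 0 i * q 0 i.

(* p^0 = sqrt(1 + |p|^2) *)
Definition energy (p : 'rV[R]_3) : R := Num.sqrt (1 + dot3 p p).

Definition mink (p q : 'rV[R]_3) : R := - energy p * energy q + dot3 p q.

(* gbar = g(p'^mu, p^mu) = sqrt(2 (- p'^mu p_mu - 1)) *)
Definition gbar (p' p : 'rV[R]_3) : R := Num.sqrt (2 * (- mink p' p - 1)).

Definition conserved (p q p' q' : 'rV[R]_3) : Prop :=
  energy p + energy q = energy p' + energy q' /\ p + q = p' + q'.
End Defs.

From HB Require Import structures.
From mathcomp Require Import all_boot all_order all_algebra.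
From mathcomp Require Import reals.
From mathcomp Require Import ring lra.
Import Order.TTheory GRing.Theory Num.Theory.
Local Open Scope ring_scope.
Set Implicit Arguments. Unset Strict Implicit.

(* Writing [a = p^0], [b = p'^0] and [c = -p'^mu p_mu = 1 + gbar^2/2], the
   Cauchy-Schwarz inequality [(p.p')^2 <= |p|^2 |p'|^2] reads
   [(a b - c)^2 <= (a^2 - 1)(b^2 - 1)], i.e. [a^2 - 2 c a b + b^2 <= 1 - c^2 <= 0].
   Hence [a/b] lies between the roots [c -+ sqrt (c^2 - 1)] of [t^2 - 2 c t + 1],
   which are close to [1] when [gbar] is small.  Conservation of four-momentum
   gives [gbar(q', q) = gbar(p', p)], so the same bound holds for [q, q']. *)

Section GramBounds.
Variable R : realFieldType.
Implicit Types a b c l : R.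

Lemma gram_ge1 a b c : 1 <= a -> 1 <= b ->
  (a * b - c) ^+ 2 <= (a ^+ 2 - 1) * (b ^+ 2 - 1) -> 1 <= c.
Proof.
move=> a_ge1 b_ge1 gram.
have ab_ge1 : 1 <= a * b by rewrite -[1]mulr1 ler_pM.
have : (a * b - c) ^+ 2 <= (a * b - 1) ^+ 2 by have := sqr_ge0 (a - b); nra.
nra.
Qed.

(* With [1 <= l], [2 c0 l <= l^2 + 1] says that [l] is at least the larger root
   of [t^2 - 2 c0 t + 1]. *)
Lemma gram_ratio_le a b c (c0 : R) l :
  0 < b -> 1 <= l -> 2 * c0 * l <= l ^+ 2 + 1 -> 1 <= c <= c0 ->
  (a * b - c) ^+ 2 <= (a ^+ 2 - 1) * (b ^+ 2 - 1) -> a <= l * b.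
Proof.
move=> b_gt0 l_ge1 l_root /andP[c_ge1 c_le] gram.
rewrite leNgt; apply/negP => a_gt.
have ab_gt0 : 0 < a * b by apply: mulr_gt0 => //; nra.
have : a ^+ 2 - 2 * c0 * a * b + b ^+ 2 <= 0 by nra.
(* [l (a^2 - 2 c0 a b + b^2) = (a - l b)(l a - b) + a b (l^2 + 1 - 2 c0 l)] *)
have : 0 < (a - l * b) * (l * a - b) by apply: mulr_gt0; nra.
nra.
Qed.

End GramBounds.

Section Kinematics.
Variable R : realType.
Implicit Types p q r : 'rV[R]_3.

Lemma dot3C p q : dot3 p q = dot3 q p.
Proof. by apply: eq_bigr => i _; rewrite mulrC. Qed.

Lemma dot3Dl p q r : dot3 (p + q) r = dot3 p r + dot3 q r.
Proof. by rewrite /dot3 -big_split; apply: eq_bigr => i _; rewrite mxE mulrDl. Qed.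

Lemma dot3Nl p r : dot3 (- p) r = - dot3 p r.
Proof. by rewrite /dot3 -sumrN; apply: eq_bigr => i _; rewrite mxE mulNr. Qed.

Lemma dot3Bl p q r : dot3 (p - q) r = dot3 p r - dot3 q r.
Proof. by rewrite dot3Dl dot3Nl. Qed.

Lemma dot3Dr p q r : dot3 r (p + q) = dot3 r p + dot3 r q.
Proof. by rewrite dot3C dot3Dl !(dot3C r). Qed.

Lemma dot3Br p q r : dot3 r (p - q) = dot3 r p - dot3 r q.
Proof. by rewrite dot3C dot3Bl !(dot3C r). Qed.

Lemma dot3_ge0 p : 0 <= dot3 p p.
Proof. by apply: sumr_ge0 => i _; rewrite -expr2 sqr_ge0. Qed.

Lemma dot3_cauchy_schwarz p q : dot3 p q ^+ 2 <= dot3 p p * dot3 q q.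
Proof.
rewrite /dot3 !big_ord_recr !big_ord0 /= !add0r.
set x0 := p 0 _; set x1 := p 0 _; set x2 := p 0 _.
set y0 := q 0 _; set y1 := q 0 _; set y2 := q 0 _.
(* Lagrange's identity: the gap is the sum of these three squares. *)
have := sqr_ge0 (x0 * y1 - x1 * y0); have := sqr_ge0 (x0 * y2 - x2 * y0).
have := sqr_ge0 (x1 * y2 - x2 * y1).
nra.
Qed.

Lemma energy_ge0 p : 0 <= energy p.
Proof. exact: sqrtr_ge0. Qed.

Lemma energy_sq p : energy p ^+ 2 = 1 + dot3 p p.
Proof. by rewrite sqr_sqrtr // addr_ge0 ?dot3_ge0. Qed.

Lemma energy_ge1 p : 1 <= energy p.
Proof. by rewrite -(sqrtr1 R) ler_sqrt ?lerDl ?dot3_ge0 // addr_ge0 ?dot3_ge0. Qed.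

Lemma minkC p q : mink p q = mink q p.
Proof. by rewrite /mink dot3C !mulNr mulrC. Qed.

Lemma mink_gram p q : (energy p * energy q + mink p q) ^+ 2
  <= (energy p ^+ 2 - 1) * (energy q ^+ 2 - 1).
Proof.
by rewrite /mink mulNr addNKr !energy_sq !(addrC 1) !addrK dot3_cauchy_schwarz.
Qed.

Lemma mink_le_N1 p q : mink p q <= -1.
Proof.
rewrite lerNr; apply: gram_ge1 (energy_ge1 p) (energy_ge1 q) _.
by rewrite opprK mink_gram.
Qed.

Lemma energy_le_scale p q c0 l : 1 <= l -> 2 * c0 * l <= l ^+ 2 + 1 ->
  - mink p q <= c0 -> energy p <= l * energy q.
Proof.
move=> l_ge1 l_root mink_le.
apply: (gram_ratio_le (c := - mink p q) (c0 := c0)) => //.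
- exact: lt_le_trans ltr01 (energy_ge1 q).
- by rewrite mink_le andbT lerNr mink_le_N1.
- by rewrite opprK mink_gram.
Qed.

Lemma mink_ge_of_gbar_le (p' p : 'rV[R]_3) (t : R) :
  gbar p' p <= t -> - mink p' p <= 1 + t ^+ 2 / 2.
Proof.
move=> gbar_le; have t_ge0 := le_trans (sqrtr_ge0 _) gbar_le.
have [arg_le0|arg_gt0] := lerP (2 * (- mink p' p - 1)) 0.
  by have := sqr_ge0 t; lra.
have : 2 * (- mink p' p - 1) <= t ^+ 2.
  by rewrite -(sqr_sqrtr (ltW arg_gt0)) lerXn2r ?nnegrE ?sqrtr_ge0.
lra.
Qed.

Lemma energy_le_scale_of_gbar (p' p : 'rV[R]_3) (t l : R) :
  1 <= l -> (2 + t ^+ 2) * l <= l ^+ 2 + 1 -> gbar p' p <= t ->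
  energy p' <= l * energy p /\ energy p <= l * energy p'.
Proof.
move=> l_ge1 l_root /mink_ge_of_gbar_le mink_le.
have l_root' : 2 * (1 + t ^+ 2 / 2) * l <= l ^+ 2 + 1 by lra.
split; apply: (energy_le_scale l_ge1 l_root') => //.
by rewrite minkC.
Qed.

Lemma mink_conserved (p q p' q' : 'rV[R]_3) :
  conserved p q p' q' -> mink q' q = mink p' p.
Proof.
case=> E_cons P_cons.
have -> : q' = p + q - p' by rewrite P_cons addrC addKr.
have E_q' : energy (p + q - p') = energy p + energy q - energy p'.
  by rewrite P_cons (addrC p') addrK; lra.
have := energy_sq (p + q - p'); rewrite E_q' /mink E_q'.
rewrite !(dot3Bl, dot3Br, dot3Dl, dot3Dr, dot3C q p, dot3C p' p, dot3C q p').
have := energy_sq p; have := energy_sq q; have := energy_sq p'.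
lra.
Qed.

Lemma gbar_conserved (p q p' q' : 'rV[R]_3) :
  conserved p q p' q' -> gbar q' q = gbar p' p.
Proof. by move=> /mink_conserved; rewrite /gbar => ->. Qed.

End Kinematics.

Lemma exp2_inv_le_half (F : numFieldType) k : (0 < k)%N -> (2 : F) ^- k <= 2^-1.
Proof.
move=> k_gt0; rewrite lef_pV2 ?posrE ?exprn_gt0 ?ltr0n //.
by rewrite ler_eXnr // ler1n.
Qed.

Theorem lemma3p5 (R : realType) :
  (exists C : R, 0 < C /\
    forall p q p' q' : 'rV[R]_3,
      conserved p q p' q' -> gbar p' p < 1 ->
      [/\ energy q' <= C * energy q, energy q <= C * energy q',
          energy p' <= C * energy p & energy p <= C * energy p'])
  /\
  (forall (p q p' q' : 'rV[R]_3) (k : nat),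
      (0 < k)%N -> conserved p q p' q' ->
      (2 : R) ^- k.+1 <= gbar p' p <= (2 : R) ^- k ->
      energy p <= Num.sqrt 5 * energy p' /\ energy p' <= Num.sqrt 5 * energy p).
Proof.
split.
  exists 3; split=> [|p q p' q' cons /ltW gbar_le1]; first lra.
  have scale3 : (2 + 1 ^+ 2) * 3 <= 3 ^+ 2 + 1 :> R by lra.
  have [bound_p' bound_p] := energy_le_scale_of_gbar (ler1n R 3) scale3 gbar_le1.
  rewrite -(gbar_conserved cons) in gbar_le1.
  have [bound_q' bound_q] := energy_le_scale_of_gbar (ler1n R 3) scale3 gbar_le1.
  by split.
move=> p q p' q' k k_gt0 _ /andP[_ gbar_le].
have gbar_le_half := le_trans gbar_le (exp2_inv_le_half R k_gt0).
have scale2 : (2 + 2^-1 ^+ 2) * 2 <= 2 ^+ 2 + 1 :> R by lra.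
have [bound_p' bound_p] :=
  energy_le_scale_of_gbar (ler1n R 2) scale2 gbar_le_half.
have two_le_sqrt5 : 2 <= Num.sqrt 5 :> R.
  by rewrite -(ger0_norm (ler0n R 2)) -sqrtr_sqr ler_sqrt //; lra.
by split; [apply: le_trans bound_p _ | apply: le_trans bound_p' _];
  rewrite ler_wpM2r ?energy_ge0.
Qed.
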